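(* Let $\mathcal{G}=(\mathcal{V},\mathcal{E})$ be a strongly connected digraph and let $\{\mathbf{A}(k)\}_{k\in\mathbb{Z}_+}$ be the sequence of weight matrices generated by the distributed quantized weight-balancing algorithm described in the context, with the step-size $\gamma(k)=2^{-n}$ for $2^n-1\le k\le 2^{n+1}-2$, $n\in\mathbb{Z}_+$. Then: (a) (Asymptotic convergence) $\lim_{k\to\infty}\mathbf{A}(k)=\mathbf{A}^\infty$ for some matrix $\mathbf{A}^\infty$ that makes the digraph weight-balanced, i.e. with $\mathbf{A}^\infty$ every node $i$ satisfies $\sum_{j\in\mathcal{N}_i^-}a^\infty_{ij}=\sum_{j\in\mathcal{N}_i^+}a^\infty_{ji}$; (b) (Convergence rate) $\Vert\boldsymbol{\epsilon}(k)\Vert_1=O(1/k)$ as $k\to\infty$.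
   Context: $\mathcal{G}=(\mathcal{V},\mathcal{E})$ is a directed graph with $\mathcal{V}=\{1,\dots,N\}$, no self-loops; $(i,j)\in\mathcal{E}$ denotes an edge from $i$ to $j$. In-neighbors $\mathcal{N}_i^-=\{j:(j,i)\in\mathcal{E}\}$, out-neighbors $\mathcal{N}_i^+=\{j:(i,j)\in\mathcal{E}\}$, out-degree $d_i^+=|\mathcal{N}_i^+|$. Strongly connected means there is a directed path from every node to every other node. A weight matrix $\mathbf{A}=(a_{ij})$ is compliant with $\mathcal{G}$: $a_{ij}\ge 0$ if $(j,i)\in\mathcal{E}$ and $a_{ij}=0$ otherwise. Algorithm: initialize $a_{ij}(0)=1$ if $j\in\mathcal{N}_i^-$ and $a_{ij}(0)=0$ otherwise. At iteration $k$, define the balance $b_i(k)=\sum_{j\in\mathcal{N}_i^-}a_{ij}(k)-\sum_{j\in\mathcal{N}_i^+}a_{ji}(k)$; each node $i$ computes the bit $n_i(k)=1$ if $b_i(k)\ge d_i^+\gamma(k)$ and $n_i(k)=0$ otherwise, and broadcasts it to its out-neighbors; then each node $i$ updates $a_{ij}(k+1)=a_{ij}(k)+n_j(k)\gamma(k)$ for all $j\in\mathcal{N}_i^-$ (other entries stay $0$). The imbalance vector is $\boldsymbol{\epsilon}(k)=(|b_i(k)|)_{i=1}^N$. *)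

From HB Require Import structures.
From mathcomp Require Import all_boot all_order all_algebra.
From mathcomp Require Import all_classical all_reals all_analysis.
Set Implicit Arguments. Unset Strict Implicit. Unset Printing Implicit Defensive.
Import Order.TTheory GRing.Theory Num.Theory.
Local Open Scope ring_scope.

(* Digraph on nodes 'I_N, given by E : rel 'I_N; E i j means edge (i,j) from i to j. *)
Section Algo.
Variables (R : realType) (N : nat) (E : rel 'I_N).

(* step size gamma(k) = 2^-n for 2^n - 1 <= k <= 2^(n+1) - 2, i.e. n = floor(log2 (k+1)) *)
Definition gamma (k : nat) : R := (2%:R ^+ (trunc_log 2 k.+1))^-1.

Definition outdeg (i : 'I_N) : nat := #|[set j | E i j]|.

Definition balance (a : 'I_N -> 'I_N -> R) (i : 'I_N) : R :=
  \sum_(j | E j i) a i j - \sum_(j | E i j) a j i.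

Definition bit (a : 'I_N -> 'I_N -> R) (g : R) (i : 'I_N) : bool :=
  (outdeg i)%:R * g <= balance a i.

Definition A0 (i j : 'I_N) : R := if E j i then 1 else 0.

Definition step (a : 'I_N -> 'I_N -> R) (g : R) (i j : 'I_N) : R :=
  if E j i then a i j + (if bit a g j then g else 0) else a i j.

Fixpoint Aseq (k : nat) : 'I_N -> 'I_N -> R :=
  match k with
  | 0%N => A0
  | k'.+1 => step (Aseq k') (gamma k')
  end.

Definition imbalance_norm1 (k : nat) : R := \sum_i `|balance (Aseq k) i|.

End Algo.

Definition strongly_connected (N : nat) (E : rel 'I_N) : Prop :=
  forall i j : 'I_N, connect E i j.

Definition compliant (R : realType) (N : nat) (E : rel 'I_N) (a : 'I_N -> 'I_N -> R) : Prop :=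
  forall i j : 'I_N, (E j i -> 0 <= a i j) /\ (~~ E j i -> a i j = 0).

Definition weight_balanced (R : realType) (N : nat) (E : rel 'I_N) (a : 'I_N -> 'I_N -> R) : Prop :=
  forall i : 'I_N, \sum_(j | E j i) a i j = \sum_(j | E i j) a j i.

(* Edge weights into node i from j equal 1 plus the total increment of j, so the balance of
   a node drops only through its own increments: a node that fires gets a nonnegative
   balance and keeps it, and the 1-norm of the imbalance never increases.
   While some node v stays silent, the increments form a nonnegative potential vanishing
   at v whose in-flow excess is at most twice the imbalance; walking back along a path to v
   (strong connectivity) bounds their total by [kappa] times the imbalance.
   The step size is 2^-n on the n-th epoch, which has 2^n steps. In such an epoch either some
   step fires nobody (then every balance is below its out-degree times 2^-n), or every node
   fires (then all balances vanish), or every step fires someone, adding at least 1 over the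
   epoch, while some node stays silent -- impossible once the imbalance is below 1/kappa.
   So the imbalance is O(2^-n) = O(1/k). Finally the weights are nondecreasing and bounded:
   either a node never fires, which bounds all increments, or all nodes have fired, after
   which the weights are balanced and frozen. As the imbalance tends to 0, their limit is
   balanced. *)

From HB Require Import structures.
From mathcomp Require Import all_boot all_order all_algebra.
From mathcomp Require Import all_classical all_reals all_analysis.
From mathcomp Require Import ring lra zify.
Import Order.TTheory GRing.Theory Num.Theory.
Import numFieldNormedType.Exports.
Local Open Scope classical_set_scope.
Local Open Scope ring_scope.
Set Implicit Arguments. Unset Strict Implicit. Unset Printing Implicit Defensive.

Lemma sum_balance (R : realType) (N : nat) (E : rel 'I_N) (a : 'I_N -> 'I_N -> R) :
  \sum_i balance E a i = 0.
Proof.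
rewrite /balance sumrB; apply/eqP; rewrite subr_eq0; apply/eqP.
under eq_bigr do rewrite big_mkcond.
under [RHS]eq_bigr do rewrite big_mkcond.
by rewrite [RHS]exchange_big.
Qed.

Section QuantizedBalancing.
Variables (R : realType) (N : nat) (E : rel 'I_N).

Local Notation A := (Aseq R E).
Local Notation gamma := (gamma R).
Local Notation norm1 := (imbalance_norm1 R E).
Local Notation deg i := ((outdeg E i)%:R : R).

Definition fired (k : nat) (i : 'I_N) : bool := bit E (A k) (gamma k) i.

Definition increment (k : nat) (i : 'I_N) : R := if fired k i then gamma k else 0.

Definition cum_incr (i : 'I_N) (k : nat) : R := \sum_(0 <= t < k) increment t i.

Definition bal (k : nat) (i : 'I_N) : R := balance E (A k) i.

Lemma gamma_gt0 k : 0 < gamma k.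
Proof. by rewrite /gamma invr_gt0 exprn_gt0 // ltr0n. Qed.

Lemma increment_ge0 k i : 0 <= increment k i.
Proof. by rewrite /increment; case: ifP => // _; exact/ltW/gamma_gt0. Qed.

Lemma cum_incrS i k : cum_incr i k.+1 = cum_incr i k + increment k i.
Proof. by rewrite /cum_incr big_nat_recr. Qed.

Lemma cum_incrB i s e : (s <= e)%N ->
  cum_incr i e - cum_incr i s = \sum_(s <= t < e) increment t i.
Proof. by move=> se; rewrite /cum_incr (@big_cat_nat _ _ _ s) //= addrC addrK. Qed.

Lemma cum_incr_mono i : {homo cum_incr i : s e / (s <= e)%N >-> s <= e}.
Proof.
move=> s e se; rewrite -subr_ge0 cum_incrB //.
by apply: sumr_ge0 => t _; exact: increment_ge0.
Qed.

Lemma cum_incr0 i : cum_incr i 0 = 0.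
Proof. by rewrite /cum_incr big_geq. Qed.

Lemma cum_incr_ge0 i k : 0 <= cum_incr i k.
Proof. by rewrite -(cum_incr0 i) cum_incr_mono. Qed.

Lemma Aseq_edge k i j : E j i -> A k i j = 1 + cum_incr j k.
Proof.
move=> ji; elim: k => [|k IHk]; first by rewrite /= /A0 ji cum_incr0 addr0.
by rewrite /= /step ji IHk cum_incrS addrA.
Qed.

Lemma Aseq_nonedge k i j : ~~ E j i -> A k i j = 0.
Proof.
move=> /negbTE ji; elim: k => [|k IHk]; first by rewrite /= /A0 ji.
by rewrite /= /step ji IHk.
Qed.

Lemma Aseq_mono i j : {homo (fun k => A k i j) : k k' / (k <= k')%N >-> k <= k'}.
Proof.
move=> k k' kk'; have [ji|ji] := boolP (E j i).
  by rewrite !Aseq_edge // lerD2l cum_incr_mono.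
by rewrite !Aseq_nonedge.
Qed.

Lemma sum_out_cst i (c : R) : \sum_(j | E i j) c = deg i * c.
Proof.
rewrite (eq_bigl (fun j => j \in [set j | E i j]%SET)); last by move=> j; rewrite inE.
by rewrite sumr_const mulr_natl.
Qed.

Lemma deg_le i : deg i <= N%:R.
Proof. by rewrite ler_nat (leq_trans (max_card _)) ?card_ord. Qed.

Lemma deg_gt0 i j : E i j -> 0 < deg i.
Proof. by move=> ij; rewrite ltr0n; apply/card_gt0P; exists j; rewrite inE. Qed.

Lemma balE k i :
  bal k i = \sum_(j | E j i) (1 + cum_incr j k) - deg i * (1 + cum_incr i k).
Proof.
rewrite /bal /balance -sum_out_cst.
by congr (_ - _); apply: eq_bigr => j ?; rewrite Aseq_edge.
Qed.

Lemma balB k k' i : bal k' i - bal k i =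
  \sum_(j | E j i) (cum_incr j k' - cum_incr j k) - deg i * (cum_incr i k' - cum_incr i k).
Proof.
have -> : \sum_(j | E j i) (cum_incr j k' - cum_incr j k) =
    \sum_(j | E j i) (1 + cum_incr j k') - \sum_(j | E j i) (1 + cum_incr j k).
  by rewrite -sumrB; apply: eq_bigr => j _; rewrite opprD addrACA subrr add0r.
rewrite !balE; lra.
Qed.

Lemma balS k i :
  bal k.+1 i = bal k i + \sum_(j | E j i) increment k j - deg i * increment k i.
Proof.
have := balB k k.+1 i; under eq_bigr do rewrite cum_incrS addrAC subrr add0r.
rewrite cum_incrS; lra.
Qed.

Lemma fired_bal_ge0 k i : fired k i -> 0 <= bal k.+1 i.
Proof.
move=> fi; rewrite balS {2}/increment fi.
have : 0 <= \sum_(j | E j i) increment k j by apply: sumr_ge0 => j _; exact: increment_ge0.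
move: fi; rewrite /fired /bit -/(bal k i); lra.
Qed.

Lemma unfired_bal_le k i : ~~ fired k i -> bal k i <= bal k.+1 i.
Proof.
move=> /negbTE fi; rewrite balS /increment fi mulr0 subr0 lerDl.
by apply: sumr_ge0 => j _; exact: increment_ge0.
Qed.

Lemma bal_ge0_persist k k' i : (k <= k')%N -> 0 <= bal k i -> 0 <= bal k' i.
Proof.
move=> /subnK <-; elim: (k' - k)%N => [//|m IHm] /IHm b_ge0.
have [/fired_bal_ge0 //|/unfired_bal_le] := boolP (fired (m + k) i).
exact: le_trans.
Qed.

Lemma sum_bal k : \sum_i bal k i = 0.
Proof. exact: sum_balance. Qed.

Lemma norm1_ge0 k : 0 <= norm1 k.
Proof. exact: sumr_ge0. Qed.

Lemma norm_bal_le k i : `|bal k i| <= norm1 k.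
Proof. by rewrite /imbalance_norm1 (bigD1 i) //= lerDl sumr_ge0. Qed.

Lemma norm1_nonincreasing : {homo norm1 : k k' / (k <= k')%N >-> k' <= k}.
Proof.
have norm1E k : norm1 k = \sum_i (`|bal k i| - bal k i) by rewrite sumrB sum_bal subr0.
suff norm1S k : norm1 k.+1 <= norm1 k.
  by move=> k k' /subnK <-; elim: (k' - k)%N => // m IHm; exact: le_trans (norm1S _) IHm.
rewrite !norm1E; apply: ler_sum => i _.
have [b_ge0|b_lt0] := lerP 0 (bal k.+1 i).
  by rewrite ger0_norm // subrr subr_ge0 ler_norm.
have le_bal : bal k i <= bal k.+1 i.
  by apply: unfired_bal_le; apply: contraTN b_lt0 => /fired_bal_ge0; rewrite leNgt.
by rewrite !ltr0_norm ?(le_lt_trans le_bal) //; lra.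
Qed.

Lemma norm1_le_of_bal_le e c : 0 <= c -> (forall i, bal e i <= deg i * c) ->
  norm1 e <= 2 * N%:R ^+ 2 * c.
Proof.
move=> c_ge0 bal_le.
have -> : norm1 e = \sum_i (`|bal e i| + bal e i) by rewrite big_split /= sum_bal addr0.
rewrite (_ : _ * c = \sum_(i : 'I_N) (2 * N%:R * c)); last first.
  by rewrite sumr_const card_ord -mulr_natl; ring.
apply: ler_sum => i _; have := bal_le i.
have : deg i * c <= N%:R * c by rewrite ler_wpM2r ?deg_le.
have : 0 <= deg i * c by rewrite mulr_ge0.
have [b_ge0|b_lt0] := lerP 0 (bal e i); [rewrite ger0_norm | rewrite ltr0_norm]; lra.
Qed.

Lemma norm1_unfired t : (forall i, ~~ fired t i) -> norm1 t <= 2 * N%:R ^+ 2 * gamma t.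
Proof.
move=> unfired; apply: norm1_le_of_bal_le => [|i]; first exact/ltW/gamma_gt0.
by have := unfired i; rewrite /fired /bit -ltNge => /ltW.
Qed.

Hypothesis connected : strongly_connected E.

Section SubFlow.
Variables (D : 'I_N -> R) (beta : R) (v : 'I_N).
Hypotheses (D_ge0 : forall i, 0 <= D i) (Dv : D v = 0) (beta_ge0 : 0 <= beta).
Hypothesis inflow_le : forall i, \sum_(j | E j i) D j - deg i * D i <= beta.

(* Along an edge x -> y, D x <= beta + deg y * D y: walking back from v, D grows by a
   factor at most N + 1 per edge. *)
Lemma subflow_path_le p x : path E x p -> last x p = v ->
  D x <= beta * N.+1%:R ^+ size p.
Proof.
elim: p x => [|y p IHp] x /=; first by move=> _ ->; rewrite Dv mulr1.
case/andP=> xy py /(IHp y py) Dy_le.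
have P_ge1 : 1 <= N.+1%:R ^+ size p :> R by rewrite exprn_ege1 // ler1n.
have Dx_le : D x <= \sum_(j | E j y) D j by rewrite (bigD1 x) //= lerDl sumr_ge0.
have degD : deg y * D y <= N%:R * (beta * N.+1%:R ^+ size p).
  by rewrite (le_trans (ler_wpM2r (D_ge0 y) (deg_le y))) // ler_wpM2l.
have := inflow_le y; rewrite exprS.
set P := N.+1%:R ^+ size p in P_ge1 Dy_le degD *; rewrite -natr1.
have : beta <= beta * P by rewrite ler_peMr.
nra.
Qed.

Lemma subflow_le i : D i <= beta * N.+1%:R ^+ N.
Proof.
have /connectP[p ip] := connected i v.
case/shortenP: ip => q iq uq _ last_q.
apply: le_trans (subflow_path_le iq (esym last_q)) _.
rewrite ler_wpM2l // ler_weXn2l ?ler1n //.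
by have := max_card (mem (i :: q)); rewrite (card_uniqP uq) card_ord => /ltnW.
Qed.

Lemma subflow_sum_le : \sum_i D i <= N%:R * (beta * N.+1%:R ^+ N).
Proof.
rewrite (_ : N%:R * _ = \sum_(i : 'I_N) (beta * N.+1%:R ^+ N)); last first.
  by rewrite sumr_const card_ord mulr_natl.
by apply: ler_sum => i _; exact: subflow_le.
Qed.

End SubFlow.

Lemma Aseq_stuck k : (forall i j, E j i -> ~~ fired k j) -> A k.+1 = A k.
Proof.
move=> unfired; apply/funext => i; apply/funext => j; rewrite /= /step.
by case: ifP => // /(unfired i j) /negbTE; rewrite /fired => ->; rewrite addr0.
Qed.

Lemma balanced_Aseq_const t : (forall i, bal t i = 0) ->
  forall k, (t <= k)%N -> A k = A t.
Proof.
move=> balanced k /subnK <-; elim: (k - t)%N => // m IHm.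
rewrite addSn Aseq_stuck // => i j ji.
rewrite /fired /bit IHm -ltNge -/(bal t j) balanced.
exact: mulr_gt0 (deg_gt0 ji) (gamma_gt0 _).
Qed.

Lemma all_fired_balanced e : (forall i, exists2 t, (t < e)%N & fired t i) ->
  forall i, bal e i = 0.
Proof.
move=> fired_before.
have bal_ge0 i : 0 <= bal e i.
  by have [t te /fired_bal_ge0] := fired_before i; exact: bal_ge0_persist.
by move=> i; apply: (psumr_eq0P (fun i _ => bal_ge0 i) (sum_bal e)).
Qed.

Lemma silent_or_balanced :
  (exists v, forall t, ~~ fired t v) \/ (exists T, forall i, bal T i = 0).
Proof.
have [|not_silent] := pselect (exists v, forall t, ~~ fired t v); first by left.
have fires_once v : exists t, fired t v.
  apply/not_existsP => never; apply: not_silent; exists v => t; apply/negP; exact: never.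
right; exists (\max_v xchoose (fires_once v)).+1; apply: all_fired_balanced => v.
exists (xchoose (fires_once v)); first by rewrite ltnS leq_bigmax.
exact: (xchooseP (fires_once v)).
Qed.

Lemma silent_cum_incr v s e : (s <= e)%N ->
  (forall t, (s <= t < e)%N -> ~~ fired t v) -> cum_incr v e - cum_incr v s = 0.
Proof.
move=> se silent; rewrite cum_incrB //; apply: big1_seq => t /andP[_].
by rewrite mem_index_iota => /silent /negbTE; rewrite /increment => ->.
Qed.

Lemma sum_cum_incr_ge s e c : (s <= e)%N ->
  (forall t, (s <= t < e)%N -> gamma t = c) ->
  (forall t, (s <= t < e)%N -> exists i, fired t i) ->
  (e - s)%:R * c <= \sum_i (cum_incr i e - cum_incr i s).
Proof.
move=> se gamma_c some_fired.
under eq_bigr do rewrite cum_incrB //.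
rewrite exchange_big /= mulr_natl -sumr_const_nat.
apply: ler_sum_nat => t st; have [i fi] := some_fired t st.
rewrite (bigD1 i) //= {1}/increment fi gamma_c // lerDl.
by apply: sumr_ge0 => j _; exact: increment_ge0.
Qed.

Definition kappa : nat := 2 * N * N.+1 ^ N.

(* While v is silent, [cum_incr] increments on [s, e) form a sub-flow vanishing at v
   whose in-flow excess is [bal e - bal s], of size at most [2 * norm1 s]. *)
Lemma silent_sum_cum_incr_le v s e : (s <= e)%N ->
  (forall t, (s <= t < e)%N -> ~~ fired t v) ->
  \sum_i (cum_incr i e - cum_incr i s) <= norm1 s * kappa%:R.
Proof.
move=> se silent.
have inflow_le i : \sum_(j | E j i) (cum_incr j e - cum_incr j s)
    - deg i * (cum_incr i e - cum_incr i s) <= 2 * norm1 s.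
  rewrite -balB; have := norm_bal_le e i; have := norm_bal_le s i.
  have := norm1_nonincreasing se; have := ler_norm (bal e i).
  have := ler_norm (- bal s i); rewrite normrN; lra.
have -> : norm1 s * kappa%:R = N%:R * (2 * norm1 s * N.+1%:R ^+ N).
  by rewrite /kappa !natrM natrX; ring.
apply: subflow_sum_le inflow_le.
- by move=> i; rewrite subr_ge0 cum_incr_mono.
- exact: silent_cum_incr se silent.
- by rewrite mulr_ge0 ?norm1_ge0.
Qed.

Definition epoch (n : nat) : nat := (2 ^ n)%N.-1.

Lemma epochS n : (epoch n).+1 = (2 ^ n)%N.
Proof. by rewrite prednK ?expn_gt0. Qed.

Lemma epoch_size n : (epoch n.+1 - epoch n)%N = (2 ^ n)%N.
Proof. by have := epochS n; have := epochS n.+1; rewrite expnS; lia. Qed.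

Lemma leq_epoch n : (epoch n <= epoch n.+1)%N.
Proof. by have := epochS n; have := epochS n.+1; rewrite expnS; lia. Qed.

Lemma leq_epoch_index n : (n <= epoch n)%N.
Proof. by rewrite -ltnS epochS ltn_expl. Qed.

Lemma epoch_trunc_log k :
  (epoch (trunc_log 2 k.+1) <= k < epoch (trunc_log 2 k.+1).+1)%N.
Proof.
apply/andP; split; first by rewrite -ltnS epochS trunc_logP.
by rewrite -ltnS epochS trunc_log_ltn.
Qed.

Lemma gamma_epoch n k : (epoch n <= k < epoch n.+1)%N -> gamma k = (2 ^+ n)^-1.
Proof.
by move=> nk; rewrite /gamma (@trunc_log_eq 2 n) // -!epochS !ltnS.
Qed.

Lemma norm1_epoch_le n : norm1 (epoch n) * kappa%:R < 1 ->
  norm1 (epoch n.+1) <= 2 * N%:R ^+ 2 / 2 ^+ n.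
Proof.
set s := epoch n; set e := epoch n.+1 => small; have se : (s <= e)%N := leq_epoch n.
have [[t st unfired]|always_fired] :=
  pselect (exists2 t, (s <= t < e)%N & forall i, ~~ fired t i).
  have te : (t <= e)%N by case/andP: st => _ /ltnW.
  by rewrite (le_trans (norm1_nonincreasing te)) // -(gamma_epoch st) norm1_unfired.
have some_fired t : (s <= t < e)%N -> exists i, fired t i.
  move=> st; apply/not_existsP => none; apply: always_fired; exists t => // i.
  by apply/negP; exact: none.
have [[v silent]|never_silent] :=
  pselect (exists v, forall t, (s <= t < e)%N -> ~~ fired t v).
  have := silent_sum_cum_incr_le se silent.
  have := sum_cum_incr_ge se (@gamma_epoch n) some_fired.
  rewrite epoch_size natrX mulfV ?expf_neq0 //; lra.
suff balanced : forall i, bal e i = 0.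
  suff -> : norm1 e = 0 by rewrite divr_ge0 ?exprn_ge0 // mulr_ge0 ?exprn_ge0.
  by apply: big1 => i _; rewrite -/(bal e i) balanced normr0.
apply: all_fired_balanced => v.
have /existsPNP[t /andP[_ te] /negP] := (forallNP _).2 never_silent v.
by rewrite negbK; exists t.
Qed.

Lemma sum_cum_incr_epochs_ge n0 :
  (forall n t, (n0 <= n)%N -> (epoch n <= t < epoch n.+1)%N -> exists i, fired t i) ->
  forall m, m%:R <= \sum_i cum_incr i (epoch (n0 + m)).
Proof.
move=> epochs_fire; elim=> [|m IHm]; first by rewrite sumr_ge0 // => i _; exact: cum_incr_ge0.
have := sum_cum_incr_ge (leq_epoch (n0 + m)) (@gamma_epoch _) (epochs_fire _ ^~ (leq_addr m n0)).
by rewrite epoch_size natrX mulfV ?expf_neq0 // sumrB addnS -natr1; lra.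
Qed.

(* If the imbalance stayed large, from some epoch on every step would fire some node, so
   the increments would grow without bound; a never-firing node forbids this. *)
Lemma norm1_eventually_small : exists k, norm1 k * kappa%:R < 1.
Proof.
case: silent_or_balanced => [[v silent]|[T balanced]]; last first.
  exists T; suff -> : norm1 T = 0 by rewrite mul0r.
  by apply: big1 => i _; rewrite -/(bal T i) balanced normr0.
apply/not_existsP => large; pose n0 := (2 * N ^ 2 * kappa)%N.
have epochs_fire n t : (n0 <= n)%N -> (epoch n <= t < epoch n.+1)%N -> exists i, fired t i.
  move=> n0n nt; apply/not_existsP => none; apply: (large t).
  have unfired i : ~~ fired t i by apply/negP; exact: none.
  apply: le_lt_trans (ler_wpM2r (ler0n _ _) (norm1_unfired unfired)) _.
  rewrite (gamma_epoch nt) mulrAC ltr_pdivrMr ?exprn_gt0 // mul1r.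
  have : (n0 < 2 ^ n)%N by apply: leq_ltn_trans n0n (ltn_expl _ _).
  by rewrite -(ltr_nat R) /n0 !natrM !natrX.
pose m := Num.Def.archi_bound (norm1 0 * kappa%:R).
have := sum_cum_incr_epochs_ge epochs_fire m.
have := silent_sum_cum_incr_le (leq0n (epoch (n0 + m))) (fun t _ => silent t).
under eq_bigr do rewrite cum_incr0 subr0.
have := archi_boundP (mulr_ge0 (norm1_ge0 0) (ler0n _ kappa)); lra.
Qed.

(* During epoch [m + 1], [norm1 <= 2 N^2 / 2^m] and [k <= 4 * 2^m]: hence the 8 N^2. *)
Lemma norm1_rate : exists K, forall k, (K <= k)%N -> norm1 k <= 8 * N%:R ^+ 2 / k%:R.
Proof.
have [k1 small] := norm1_eventually_small.
exists (epoch k1.+1) => k k1k; have /andP[lo hi] := epoch_trunc_log k.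
have : (k1 < trunc_log 2 k.+1)%N by apply: trunc_log_max; rewrite // -epochS ltnS.
case: (trunc_log 2 k.+1) lo hi => // m lo hi; rewrite ltnS => k1m.
have k_gt0 : (0 < k)%N.
  apply: leq_trans _ lo; have := epochS m.+1; have := expn_gt0 2 m; rewrite expnS; lia.
have small_m : norm1 (epoch m) * kappa%:R < 1.
  apply: le_lt_trans small; rewrite ler_wpM2r // norm1_nonincreasing //.
  exact: leq_trans k1m (leq_epoch_index m).
have k_le : k%:R <= 4 * 2 ^+ m :> R.
  have : (k <= 4 * 2 ^ m)%N by have := epochS m.+2; rewrite !expnS; lia.
  by rewrite -natrX -(natrM R 4) ler_nat.
rewrite ler_pdivlMr ?ltr0n //.
have norm1_k := le_trans (norm1_nonincreasing lo) (norm1_epoch_le small_m).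
set c := 2 * N%:R ^+ 2 / 2 ^+ m in norm1_k.
have c_ge0 : 0 <= c by rewrite divr_ge0 ?mulr_ge0 ?exprn_ge0.
have -> : 8 * N%:R ^+ 2 = c * (4 * 2 ^+ m) by rewrite /c; field; rewrite expf_neq0.
exact: le_trans (ler_wpM2r (ler0n _ _) norm1_k) (ler_wpM2l c_ge0 k_le).
Qed.

Lemma Aseq_bounded i j : exists W, forall k, A k i j <= W.
Proof.
case: silent_or_balanced => [[v silent]|[T balanced]]; last first.
  exists (A T i j) => k; rewrite -(balanced_Aseq_const balanced (leq_maxr k T)).
  exact: Aseq_mono (leq_maxl k T).
exists (1 + norm1 0 * kappa%:R) => k; have [ji|/Aseq_nonedge ->] := boolP (E j i); last first.
  by rewrite addr_ge0 ?mulr_ge0 ?norm1_ge0.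
rewrite Aseq_edge // lerD2l.
apply: le_trans (silent_sum_cum_incr_le (leq0n k) (fun t _ => silent t)).
under eq_bigr do rewrite cum_incr0 subr0.
by rewrite (bigD1 j) //= lerDl sumr_ge0 // => l _; exact: cum_incr_ge0.
Qed.

Lemma Aseq_cvg i j : cvgn (fun k => A k i j).
Proof.
have [W le_W] := Aseq_bounded i j.
apply/cvg_ex; exists (sup (range (fun k => A k i j))).
by apply: nondecreasing_cvgn; [exact: Aseq_mono | exists W => _ [k _ <-]].
Qed.

Local Notation Ainf := (fun i j => limn (fun k => A k i j)).

Lemma compliant_lim_Aseq : compliant E Ainf.
Proof.
move=> i j; split => [ji|/Aseq_nonedge A0].
  apply: limr_ge; first exact: Aseq_cvg.
  by apply: nearW => k; rewrite Aseq_edge // addr_ge0 ?cum_incr_ge0.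
by under eq_fun do rewrite A0; exact: norm_lim_cst.
Qed.

Lemma norm1_cvg0 : norm1 @ \oo --> 0.
Proof.
have [K rateK] := norm1_rate.
apply: (@squeeze_cvgr _ _ _ _ (cst 0) (fun k => 8 * N%:R ^+ 2 / k%:R)).
- near=> k; rewrite norm1_ge0 rateK //; near: k; exact: nbhs_infty_ge.
- exact: cvg_cst.
rewrite -cvg_shiftS; have := cvgM (cvg_cst (8 * N%:R ^+ 2 : R)) (@cvg_harmonic R).
by rewrite mulr0; apply.
Unshelve. all: by end_near.
Qed.

Lemma bal_cvg0 i : (fun k => bal k i) @ \oo --> 0.
Proof.
apply: (@squeeze_cvgr _ _ _ _ (- norm1) norm1).
- by apply: nearW => k; rewrite -ler_norml norm_bal_le.
- by rewrite -oppr0; exact: cvgN norm1_cvg0.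
exact: norm1_cvg0.
Qed.

Lemma weight_balanced_lim_Aseq : weight_balanced E Ainf.
Proof.
move=> i; apply/eqP; rewrite -subr_eq0 -/(balance E Ainf i); apply/eqP.
apply: (cvg_unique _ _ (bal_cvg0 i)) => //; rewrite /bal /balance.
apply: cvgB; apply: cvg_big => //; try exact: add_continuous.
all: by move=> j _; exact: Aseq_cvg.
Qed.

End QuantizedBalancing.

Unset Implicit Arguments.

Theorem theorem1 (R : realType) (N : nat) (E : rel 'I_N)
  (Hirr : forall i : 'I_N, ~~ E i i)
  (Hsc : strongly_connected E) :
  (exists Ainf : 'I_N -> 'I_N -> R,
      (forall i j : 'I_N, (fun k => Aseq R E k i j) @ \oo --> Ainf i j) /\
      compliant E Ainf /\ weight_balanced E Ainf) /\
  (exists (C : R) (K : nat), forall k : nat, (K <= k)%N ->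
      imbalance_norm1 R E k <= C / k%:R).
Proof.
(* Self-loops cancel in every balance. *)
split; last by have [K rateK] := norm1_rate R Hsc; exists (8 * N%:R ^+ 2), K.
exists (fun i j => limn (fun k => Aseq R E k i j)); split; first exact: Aseq_cvg.
by split; [exact: compliant_lim_Aseq | exact: weight_balanced_lim_Aseq].
Qed.
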